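(* For any data as described in the context (any integers $I\ge 2$, $N^{\mathsf M},N^{\mathsf R}\ge 1$, $L\ge1$, $B_j\ge 1$, any discount factor $\delta\in(0,1)$, any real cost, yield and salvage parameters, any spot prices $s^l_i\in\mathbb{R}^3_+$, any real penalty coefficients $\Delta^l_{i,j,b}$, and any initial mode $x_0\in\{\mathsf O,\mathsf M_{N^{\mathsf M}}\}$), the pathwise linear program (PLP) has a finite optimal objective function value and at least one bounded optimal solution.
   Context: Stages are $\mathcal{I}=\{0,1,\dots,I-1\}$. Operating modes are $\mathsf A$ (abandoned), $\mathsf M_1,\dots,\mathsf M_{N^{\mathsf M}}$ (mothballing/mothballed), $\mathsf O$ (operational), $\mathsf R_1,\dots,\mathsf R_{N^{\mathsf R}-1}$ (reactivating). Let $\mathcal{X}'=\{\mathsf O,\mathsf M_{N^{\mathsf M}}\}$ and $\mathcal{X}''=\mathcal{X}'\cup\{\mathsf A\}$. Feasible action sets $\mathcal{A}_i(x)$ for $x\in\mathcal{X}''$: for $i\le I-2$, $\mathcal{A}_i(\mathsf O)=\{\mathsf A,\mathsf M_1,\mathsf P,\mathsf S\}$ if $i\le I-1-N^{\mathsf M}$ and $\{\mathsf A,\mathsf P,\mathsf S\}$ otherwise; $\mathcal{A}_i(\mathsf M_{N^{\mathsf M}})=\{\mathsf A,\mathsf M_{N^{\mathsf M}},\mathsf R_1\}$ if $i\le I-1-N^{\mathsf R}$ and $\{\mathsf A,\mathsf M_{N^{\mathsf M}}\}$ otherwise; $\mathcal{A}_i(\mathsf A)=\{\mathsf A\}$; and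 $\mathcal{A}_{I-1}(x)=\{\mathsf A\}$ for all $x$. For spot prices $s=(s^{C},s^{E},s^{N})\in\mathbb{R}^3_+$ and real constants $Q,\gamma_C,\gamma_N,\mathsf C_{\mathsf P},\mathsf C_{\mathsf S},\mathsf C_{\mathsf M},\mathsf I_{\mathsf M},\mathsf I_{\mathsf R},S$, the reward is $r(\mathsf O,s,\mathsf P)=(s^E-\gamma_C s^C-\gamma_N s^N)Q-\mathsf C_{\mathsf P}$, $r(\mathsf O,s,\mathsf S)=-\mathsf C_{\mathsf S}$, $r(\mathsf O,s,\mathsf M_1)=-\mathsf I_{\mathsf M}$, $r(\mathsf M_{N^{\mathsf M}},s,\mathsf M_{N^{\mathsf M}})=-\mathsf C_{\mathsf M}$, $r(\mathsf M_{N^{\mathsf M}},s,\mathsf R_1)=-\mathsf I_{\mathsf R}$, $r(\mathsf O,s,\mathsf A)=r(\mathsf M_{N^{\mathsf M}},s,\mathsf A)=S$, $r(\mathsf A,s,\mathsf A)=0$. The modified transition $f'(x,a)$ equals $\mathsf O$ for $(x,a)\in\{(\mathsf O,\mathsf P),(\mathsf O,\mathsf S),(\mathsf M_{N^{\mathsf M}},\mathsf R_1)\}$, equals $\mathsf M_{N^{\mathsf M}}$ for $(x,a)\in\{(\mathsf O,\mathsf M_1),(\mathsf M_{N^{\mathsf M}},\mathsf M_{N^{\mathsf M}})\}$, and equals $\mathsf A$ when $a=\mathsf A$. The stage transition is $g(i,x,a)=i+N^{\mathsf M}$ if $(x,a)=(\mathsf O,\mathsf M_1)$, $i+N^{\mathsf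 R}$ if $(x,a)=(\mathsf M_{N^{\mathsf M}},\mathsf R_1)$, and $i+1$ otherwise. Data: $L$ sample paths indexed by $l\in\mathcal{L}=\{1,\dots,L\}$, with spot prices $s^l_i\in\mathbb{R}^3_+$ for each $i\in\mathcal{I}$, and real penalty coefficients $\Delta^l_{i,j,b}$ for $i<j$, $b\in\mathcal{B}_j=\{1,\dots,B_j\}$ (in the paper, $\Delta^l_{i,j,b}=\delta^{j-i}(\phi_{j,b}(F^l_j)-\mathbb{E}[\phi_{j,b}(F_j)\mid F^l_i])$ for basis functions $\phi_{j,b}$ of simulated forward curves $F^l$). Decision variables: weights $\beta_{j,x,b}\in\mathbb{R}$ for $j\in\{1,\dots,I-2\}$, $x\in\mathcal{X}'$, $b\in\mathcal{B}_j$; and $U^l_0(x_0)$ and $U^l_i(x)$ for $l\in\mathcal{L}$, $i\in\{1,\dots,I-1\}$, $x\in\mathcal{X}''$. For $(l,i,x,a)$ let $j=g(i,x,a)$, $x'=f'(x,a)$, and define the penalty $\pi^l_i(x,a;\beta)=\sum_{b\in\mathcal{B}_j}\beta_{j,x',b}\Delta^l_{i,j,b}$ if $x'\in\mathcal{X}'$ and $j\le I-2$, and $0$ otherwise. PLP is: minimize $\frac1L\sum_{l\in\mathcal{L}}U^l_0(x_0)$ over $(\beta,U)$ subject to, for all $l$: $U^l_0(x_0)\ge r(x_0,s^l_0,a)-\pi^l_0(x_0,a;\beta)+\delta U^l_{g(0,x_0,a)}(f'(x_0,a))$ for all $a\in\mathcal{A}_0(x_0)$; $U^l_i(x)\ge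 r(x,s^l_i,a)-\pi^l_i(x,a;\beta)+\delta U^l_{g(i,x,a)}(f'(x,a))$ for all $i\in\{1,\dots,I-2\}$, $x\in\mathcal{X}''$, $a\in\mathcal{A}_i(x)$; and $U^l_{I-1}(x)\ge r(x,s^l_{I-1},\mathsf A)$ for all $x\in\mathcal{X}''$. *)

From Stdlib Require Import Reals List Arith.
Open Scope R_scope.

Inductive Mode := MO (* operational *) | MM (* M_{N^M}, mothballed *) | MA (* abandoned *).

Inductive Action := aA | aM1 | aP | aS | aMN | aR1.

(* Problem data. Indices l, i, j, b are natural numbers; only
   l in 1..L, i in 0..I-1, 1 <= j <= I-2, b in 1..B j are used. *)
Record PLPData := {
  I : nat; NM : nat; NR : nat; L : nat;
  B : nat -> nat;
  delta : R;
  Q : R; gammaC : R; gammaN : R;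
  CP : R; CS : R; CM : R; IM : R; IR : R; Salv : R;
  sC : nat -> nat -> R;
  sE : nat -> nat -> R;
  sN : nat -> nat -> R;
  Delta : nat -> nat -> nat -> nat -> R;
  x0 : Mode
}.

Definition feasible_action (d : PLPData) (i : nat) (x : Mode) (a : Action) : Prop :=
  if Nat.eqb (S i) (I d) then a = aA
  else match x with
       | MO => a = aA \/ a = aP \/ a = aS \/ (a = aM1 /\ (i + NM d + 1 <= I d)%nat)
       | MM => a = aA \/ a = aMN \/ (a = aR1 /\ (i + NR d + 1 <= I d)%nat)
       | MA => a = aA
       end.

(* Reward r(x, s^l_i, a); value on infeasible pairs is irrelevant (0). *)
Definition reward (d : PLPData) (l i : nat) (x : Mode) (a : Action) : R :=
  match x, a with
  | MO, aP => (sE d l i - gammaC d * sC d l i - gammaN d * sN d l i) * Q d - CP d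
  | MO, aS => - CS d
  | MO, aM1 => - IM d
  | MM, aMN => - CM d
  | MM, aR1 => - IR d
  | MO, aA => Salv d
  | MM, aA => Salv d
  | MA, aA => 0
  | _, _ => 0
  end.

Definition ftrans (x : Mode) (a : Action) : Mode :=
  match x, a with
  | _, aA => MA
  | MO, aP | MO, aS | MM, aR1 => MO
  | MO, aM1 | MM, aMN => MM
  | _, _ => MA
  end.

Definition gtrans (d : PLPData) (i : nat) (x : Mode) (a : Action) : nat :=
  match x, a with
  | MO, aM1 => (i + NM d)%nat
  | MM, aR1 => (i + NR d)%nat
  | _, _ => S i
  end.

Definition sum1 (n : nat) (f : nat -> R) : R :=
  fold_right Rplus 0 (map f (seq 1 n)).

Record PLPVar := {
  beta : nat -> Mode -> nat -> R;
  U0 : nat -> R;                    (* U0 l = U^l_0(x0) *)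
  U : nat -> nat -> Mode -> R       (* U l i x = U^l_i(x), i >= 1 *)
}.

Definition penalty (d : PLPData) (v : PLPVar) (l i : nat) (x : Mode) (a : Action) : R :=
  let j := gtrans d i x a in
  let x' := ftrans x a in
  match x' with
  | MA => 0
  | _ => if Nat.leb j (I d - 2) then sum1 (B d j) (fun b => beta v j x' b * Delta d l i j b)
         else 0
  end.

Definition PLP_feasible (d : PLPData) (v : PLPVar) : Prop :=
  forall l : nat, (1 <= l <= L d)%nat ->
    (forall a, feasible_action d 0 (x0 d) a ->
       U0 v l >= reward d l 0 (x0 d) a - penalty d v l 0 (x0 d) a
                 + delta d * U v l (gtrans d 0 (x0 d) a) (ftrans (x0 d) a))
    /\ (forall i x a, (1 <= i <= I d - 2)%nat -> feasible_action d i x a ->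
       U v l i x >= reward d l i x a - penalty d v l i x a
                    + delta d * U v l (gtrans d i x a) (ftrans x a))
    /\ (forall x, U v l (I d - 1)%nat x >= reward d l (I d - 1)%nat x aA).

Definition PLP_objective (d : PLPData) (v : PLPVar) : R :=
  / INR (L d) * sum1 (L d) (fun l => U0 v l).

From Stdlib Require Import Reals List Lra Lia RList FunctionalExtensionality.
Import ListNotations.
Open Scope R_scope.

(* PLP is a finite linear program: only finitely many of its variables occur
   in its constraints.  It is feasible (beta = 0 and all values equal to
   max reward / (1 - delta)), and its objective is bounded below by the
   salvage value S, because abandoning is always allowed and the value of the
   abandoned mode is nonnegative.  A feasible linear program that is bounded
   below attains its infimum: adding a variable t above the objective and
   eliminating all other variables by Fourier-Motzkin leaves finitely many
   linear inequalities in t, whose solution set is a closed half-line. *)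

Lemma In_filter_dec {A : Type} (P : A -> Prop) (dec : forall a, {P a} + {~ P a}) a s :
  In a (filter (fun b => if dec b then true else false) s) <-> In a s /\ P a.
Proof.
  rewrite filter_In. destruct (dec a); split; intros [H1 H2]; auto; easy.
Qed.

Lemma exists_between (Ls Us : list R) :
  (forall a b, In a Ls -> In b Us -> a <= b) ->
  exists y, (forall a, In a Ls -> a <= y) /\ (forall b, In b Us -> y <= b).
Proof.
  intros HLU. destruct Ls as [|a0 Ls].
  - exists (MinRlist Us). split; [easy | apply MinRlist_P1].
  - exists (MaxRlist (a0 :: Ls)). split; [apply MaxRlist_P1|].
    intros b Hb. apply HLU; [apply MaxRlist_P2; exists a0; now left | exact Hb].
Qed.

Lemma affine_le0_pos c a y : 0 < c -> (c * y + a <= 0 <-> y <= - a / c).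
Proof.
  intros Hc. replace (c * y + a) with (c * (y - - a / c)) by (field; lra).
  split; intros H; nra.
Qed.

Lemma affine_le0_neg c a y : c < 0 -> (c * y + a <= 0 <-> - a / c <= y).
Proof.
  intros Hc. replace (c * y + a) with (c * (y - - a / c)) by (field; lra).
  split; intros H; nra.
Qed.

(** * Fourier-Motzkin elimination *)

Section FourierMotzkin.

Context {V : Type} (V_eq_dec : forall u w : V, {u = w} + {u <> w}).

Definition upd (x : V -> R) (w : V) (y : R) : V -> R :=
  fun u => if V_eq_dec u w then y else x u.

Lemma upd_same x w : upd x w (x w) = x.
Proof.
  apply functional_extensionality; intros u; unfold upd.
  destruct (V_eq_dec u w); congruence.
Qed.

(* Affine in each coordinate separately, with a slope independent of the
   other coordinates; for functionals depending on finitely many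
   coordinates this is exactly affinity. *)
Definition coord_affine (g : (V -> R) -> R) : Prop :=
  forall w, exists c, forall x y, g (upd x w y) = g (upd x w 0) + c * y.

Definition coef (g : (V -> R) -> R) (w : V) : R :=
  g (upd (fun _ => 0) w 1) - g (upd (fun _ => 0) w 0).

Lemma coord_affine_coef g w : coord_affine g ->
  forall x y, g (upd x w y) = g (upd x w 0) + coef g w * y.
Proof.
  intros Hg. destruct (Hg w) as [c Hc].
  replace (coef g w) with c by (unfold coef; rewrite (Hc _ 1); ring).
  exact Hc.
Qed.

Lemma coord_affine_split g w x : coord_affine g ->
  g x = g (upd x w 0) + coef g w * x w.
Proof.
  intros Hg. rewrite <- (coord_affine_coef g w Hg), upd_same. reflexivity.
Qed.

Lemma coord_affine_const c : coord_affine (fun _ => c).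
Proof. intros w; exists 0; intros; ring. Qed.

Lemma coord_affine_proj u : coord_affine (fun x => x u).
Proof.
  intros w; exists (if V_eq_dec u w then 1 else 0); intros x y.
  unfold upd; destruct (V_eq_dec u w); ring.
Qed.

Lemma coord_affine_add f g :
  coord_affine f -> coord_affine g -> coord_affine (fun x => f x + g x).
Proof.
  intros Hf Hg w. destruct (Hf w) as [a Ha], (Hg w) as [b Hb].
  exists (a + b); intros; rewrite Ha, Hb; ring.
Qed.

Lemma coord_affine_sub f g :
  coord_affine f -> coord_affine g -> coord_affine (fun x => f x - g x).
Proof.
  intros Hf Hg w. destruct (Hf w) as [a Ha], (Hg w) as [b Hb].
  exists (a - b); intros; rewrite Ha, Hb; ring.
Qed.

Lemma coord_affine_scale_l c f : coord_affine f -> coord_affine (fun x => c * f x).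
Proof. intros Hf w. destruct (Hf w) as [a Ha]. exists (c * a); intros; rewrite Ha; ring. Qed.

Lemma coord_affine_scale_r c f : coord_affine f -> coord_affine (fun x => f x * c).
Proof. intros Hf w. destruct (Hf w) as [a Ha]. exists (a * c); intros; rewrite Ha; ring. Qed.

Lemma coord_affine_sum {A : Type} (s : list A) (f : A -> (V -> R) -> R) :
  (forall b, coord_affine (f b)) ->
  coord_affine (fun x => fold_right Rplus 0 (map (fun b => f b x) s)).
Proof.
  intros Hf. induction s as [|b s IH]; simpl.
  - apply coord_affine_const.
  - apply coord_affine_add; [apply Hf | exact IH].
Qed.

Definition satisfies (C : list ((V -> R) -> R)) (x : V -> R) : Prop :=
  Forall (fun g => g x <= 0) C.

(* The nonnegative combination of an upper bound [p] and a lower bound [q]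
   on the coordinate [w] in which [w] cancels. *)
Definition combine_bounds (w : V) (p q : (V -> R) -> R) : (V -> R) -> R :=
  fun x => - coef q w * p x + coef p w * q x.

Definition eliminate (w : V) (C : list ((V -> R) -> R)) : list ((V -> R) -> R) :=
  filter (fun g => if Req_EM_T (coef g w) 0 then true else false) C ++
  flat_map (fun p => map (combine_bounds w p)
                      (filter (fun q => if Rlt_dec (coef q w) 0 then true else false) C))
           (filter (fun p => if Rlt_dec 0 (coef p w) then true else false) C).

Lemma In_eliminate w C g : In g (eliminate w C) <->
  (In g C /\ coef g w = 0) \/
  exists p q, In p C /\ 0 < coef p w /\ In q C /\ coef q w < 0 /\ g = combine_bounds w p q.
Proof.
  unfold eliminate.
  rewrite in_app_iff, (In_filter_dec (fun g => coef g w = 0)), in_flat_map.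
  apply or_iff_compat_l. split.
  - intros [p [Hp Hg]]. apply (In_filter_dec (fun p => 0 < coef p w)) in Hp. apply in_map_iff in Hg.
    destruct Hg as [q [<- Hq]]. apply (In_filter_dec (fun q => coef q w < 0)) in Hq. exists p, q; tauto.
  - intros [p [q [Hp [Hcp [Hq [Hcq ->]]]]]]. exists p.
    rewrite (In_filter_dec (fun p => 0 < coef p w)).
    split; [tauto|]. apply in_map. apply (In_filter_dec (fun q => coef q w < 0)); tauto.
Qed.

Lemma eliminate_affine w C :
  Forall coord_affine C -> Forall coord_affine (eliminate w C).
Proof.
  rewrite !Forall_forall. intros HC g Hg. apply In_eliminate in Hg.
  destruct Hg as [[Hg _] | [p [q [Hp [_ [Hq [_ ->]]]]]]]; [auto|].
  apply coord_affine_add; apply coord_affine_scale_l; auto.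
Qed.

Lemma eliminate_spec w C : Forall coord_affine C ->
  forall x, (exists y, satisfies C (upd x w y)) <-> satisfies (eliminate w C) x.
Proof.
  intros HC x. unfold satisfies. rewrite Forall_forall in HC. setoid_rewrite Forall_forall.
  set (x0 := upd x w 0).
  assert (Hval : forall g y, In g C -> g (upd x w y) = g x0 + coef g w * y)
    by (intros g y Hg; apply coord_affine_coef; auto).
  assert (Hx : forall g, In g (eliminate w C) -> g x = g x0).
  { intros g Hg. assert (Hcg : coef g w = 0).
    { destruct (proj1 (In_eliminate w C g) Hg)
        as [[_ H] | [p [q [Hp [Hcp [Hq [Hcq ->]]]]]]]; [exact H|].
      unfold combine_bounds, coef. ring. }
    assert (Hga : coord_affine g).
    { apply (Forall_forall coord_affine (eliminate w C)); [|exact Hg].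
      apply eliminate_affine, Forall_forall. exact HC. }
    rewrite (coord_affine_split g w x Hga), Hcg, Rmult_0_l, Rplus_0_r. reflexivity. }
  split.
  - intros [y Hy] g Hg. rewrite Hx by exact Hg.
    apply In_eliminate in Hg.
    destruct Hg as [[Hg Hz] | [p [q [Hp [Hcp [Hq [Hcq ->]]]]]]].
    + specialize (Hy g Hg). rewrite Hval, Hz in Hy by exact Hg. lra.
    + pose proof (Hy p Hp) as H1. pose proof (Hy q Hq) as H2.
      rewrite Hval in H1, H2 by assumption. unfold combine_bounds.
      replace (- coef q w * p x0 + coef p w * q x0)
        with (- coef q w * (p x0 + coef p w * y) + coef p w * (q x0 + coef q w * y))
        by ring.
      assert (0 <= - coef q w * - (p x0 + coef p w * y)) by (apply Rmult_le_pos; lra).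
      assert (0 <= coef p w * - (q x0 + coef q w * y)) by (apply Rmult_le_pos; lra).
      lra.
  - intros HS.
    destruct (exists_between
      (map (fun q => - q x0 / coef q w)
         (filter (fun q => if Rlt_dec (coef q w) 0 then true else false) C))
      (map (fun p => - p x0 / coef p w)
         (filter (fun p => if Rlt_dec 0 (coef p w) then true else false) C)))
      as [y [Hlow Hup]].
    { intros a b Ha Hb. apply in_map_iff in Ha, Hb.
      destruct Ha as [q [<- Hq]], Hb as [p [<- Hp]].
      apply (In_filter_dec (fun q => coef q w < 0)) in Hq.
      apply (In_filter_dec (fun p => 0 < coef p w)) in Hp.
      assert (Hpq : combine_bounds w p q x <= 0).
      { apply HS, In_eliminate. right. exists p, q; tauto. }
      rewrite Hx in Hpq by (apply In_eliminate; right; exists p, q; tauto).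
      unfold combine_bounds in Hpq.
      apply (affine_le0_neg (coef q w)); [tauto|].
      replace (coef q w * (- p x0 / coef p w) + q x0)
        with ((- coef q w * p x0 + coef p w * q x0) * / coef p w) by (field; lra).
      assert (0 < / coef p w) by (apply Rinv_0_lt_compat; tauto).
      assert (0 <= - (- coef q w * p x0 + coef p w * q x0) * / coef p w)
        by (apply Rmult_le_pos; lra).
      lra. }
    exists y. intros g Hg. rewrite Hval, Rplus_comm by exact Hg.
    destruct (Rtotal_order (coef g w) 0) as [Hn | [Hz | Hp]].
    + apply affine_le0_neg; [exact Hn|]. apply Hlow, (in_map (fun q => - q x0 / coef q w)).
      apply (In_filter_dec (fun q => coef q w < 0)); auto.
    + assert (Hg' : In g (eliminate w C)) by (apply In_eliminate; left; auto).
      specialize (HS g Hg'). rewrite Hx in HS by exact Hg'. rewrite Hz, Rmult_0_l. lra.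
    + apply affine_le0_pos; [exact Hp|]. apply Hup, (in_map (fun p => - p x0 / coef p w)).
      apply (In_filter_dec (fun p => 0 < coef p w)); auto.
Qed.

Definition agree_off (vs : list V) (x y : V -> R) : Prop :=
  forall u, ~ In u vs -> y u = x u.

Theorem fourier_motzkin vs C : Forall coord_affine C ->
  exists C', Forall coord_affine C' /\
    forall x, (exists y, agree_off vs x y /\ satisfies C y) <-> satisfies C' x.
Proof.
  revert C. induction vs as [|w vs IH]; intros C HC.
  - exists C. split; [exact HC|]. intros x. split.
    + intros [y [Hxy Hy]].
      replace x with y by (apply functional_extensionality; intros u; auto).
      exact Hy.
    + intros Hx. exists x. split; [easy | exact Hx].
  - destruct (IH C HC) as [C1 [HC1 HE1]].
    exists (eliminate w C1). split; [now apply eliminate_affine|].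
    intros x. rewrite <- (eliminate_spec w C1 HC1). split.
    + intros [y [Hxy Hy]]. exists (y w). apply HE1. exists y. split; [|exact Hy].
      intros u Hu. unfold upd. destruct (V_eq_dec u w) as [->|Hne]; [reflexivity|].
      apply Hxy. intros [E|E]; [congruence | contradiction].
    + intros [y Hy]. apply HE1 in Hy. destruct Hy as [z [Hz Hsat]].
      exists z. split; [|exact Hsat]. intros u Hu.
      rewrite Hz by (intros H; apply Hu; now right).
      unfold upd. destruct (V_eq_dec u w) as [->|]; [exfalso; apply Hu; now left | reflexivity].
Qed.

End FourierMotzkin.

(** * Linear programs bounded below attain their minimum *)

Definition solves_all (P : list (R * R)) (t : R) : Prop :=
  Forall (fun p => fst p * t + snd p <= 0) P.

Lemma solves_all_min (P : list (R * R)) t0 lb :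
  solves_all P t0 -> (forall t, solves_all P t -> lb <= t) ->
  exists ts, solves_all P ts /\ forall t, solves_all P t -> ts <= t.
Proof.
  unfold solves_all. intros H0 Hlb. rewrite Forall_forall in H0.
  set (lower := map (fun p => - snd p / fst p)
                  (filter (fun p => if Rlt_dec (fst p) 0 then true else false) P)).
  assert (Hbelow : forall t, Forall (fun p => fst p * t + snd p <= 0) P ->
            forall a, In a lower -> a <= t).
  { intros t Ht a Ha. rewrite Forall_forall in Ht. apply in_map_iff in Ha.
    destruct Ha as [p [<- Hp]]. apply (In_filter_dec (fun p => fst p < 0)) in Hp.
    apply affine_le0_neg; [tauto | apply Ht; tauto]. }
  (* the constraints with nonnegative slope already hold below [t0] *)
  assert (Hdown : forall t, t <= t0 -> (forall a, In a lower -> a <= t) ->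
            Forall (fun p => fst p * t + snd p <= 0) P).
  { intros t Ht Hl. apply Forall_forall. intros p Hp.
    destruct (Rlt_dec (fst p) 0) as [Hn|Hn].
    - apply affine_le0_neg; [exact Hn|]. apply Hl.
      apply (in_map (fun p => - snd p / fst p)).
      apply (In_filter_dec (fun p => fst p < 0)); auto.
    - specialize (H0 p Hp). nra. }
  destruct lower as [|a0 rest] eqn:E.
  - exfalso. assert (Hlow : lb <= Rmin t0 (lb - 1)).
    { apply Hlb, Hdown; [apply Rmin_l | easy]. }
    pose proof (Rmin_r t0 (lb - 1)). lra.
  - assert (Hmax : In (MaxRlist (a0 :: rest)) (a0 :: rest))
      by (apply MaxRlist_P2; exists a0; now left).
    exists (MaxRlist (a0 :: rest)). split.
    + apply Hdown; [|apply MaxRlist_P1].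
      apply (Hbelow t0); [now apply Forall_forall | exact Hmax].
    + intros t Ht. exact (Hbelow t Ht _ Hmax).
Qed.

Section LinearProgram.

Context {V : Type} (V_eq_dec : forall u w : V, {u = w} + {u <> w}).

Definition depends_only (vs : list V) (g : (V -> R) -> R) : Prop :=
  forall x x', (forall u, In u vs -> x u = x' u) -> g x = g x'.

Let oV_eq_dec (u w : option V) : {u = w} + {u <> w}.
Proof. decide equality. Defined.

Let lift (g : (V -> R) -> R) : (option V -> R) -> R := fun z => g (fun v => z (Some v)).

Let coord_affine_lift g :
  coord_affine V_eq_dec g -> coord_affine oV_eq_dec (lift g).
Proof.
  intros Hg [v|].
  - destruct (Hg v) as [c Hc]. exists c. intros z y. unfold lift.
    assert (Hupd : forall y, (fun u => upd oV_eq_dec z (Some v) y (Some u))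
                            = upd V_eq_dec (fun u => z (Some u)) v y).
    { intros y'. apply functional_extensionality. intros u. unfold upd.
      destruct (V_eq_dec u v), (oV_eq_dec (Some u) (Some v)); congruence. }
    rewrite !Hupd. apply Hc.
  - exists 0. intros z y. unfold lift, upd. simpl. ring.
Qed.

Let at_t (t : R) : option V -> R := upd oV_eq_dec (fun _ => 0) None t.

Lemma objective_bounds_halflines (C : list ((V -> R) -> R)) (f : (V -> R) -> R)
  (vs : list V) :
  Forall (coord_affine V_eq_dec) C -> coord_affine V_eq_dec f ->
  Forall (depends_only vs) C -> depends_only vs f ->
  exists P, forall t, solves_all P t <-> exists x, satisfies C x /\ f x <= t.
Proof.
  intros HC Hf HCvs Hfvs.
  (* a fresh coordinate [None] carries an upper bound [t] on the objective *)
  set (Ct := (fun z => lift f z - z None) :: map lift C).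
  assert (HCt : Forall (coord_affine oV_eq_dec) Ct).
  { constructor.
    - apply coord_affine_sub; [now apply coord_affine_lift | apply coord_affine_proj].
    - apply Forall_map. eapply Forall_impl; [|exact HC]. apply coord_affine_lift. }
  destruct (fourier_motzkin oV_eq_dec (map Some vs) Ct HCt) as [C' [HC' HE]].
  exists (map (fun g => (coef oV_eq_dec g None, g (at_t 0))) C'). intros t.
  transitivity (satisfies C' (at_t t)).
  { unfold satisfies, solves_all. rewrite Forall_map, !Forall_forall.
    rewrite Forall_forall in HC'.
    assert (Hg : forall g, In g C' -> g (at_t t) = coef oV_eq_dec g None * t + g (at_t 0)).
    { intros g Hg. unfold at_t. rewrite (coord_affine_coef oV_eq_dec g None (HC' g Hg)).
      ring. }
    split; intros H g Hin; specialize (H g Hin); simpl in *; rewrite ?Hg in * by exact Hin;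
      lra. }
  rewrite <- HE. unfold satisfies, Ct. split.
  - intros [z [Hz Hsat]]. apply Forall_cons_iff in Hsat. destruct Hsat as [Hobj Hsat].
    exists (fun v => z (Some v)). split.
    + apply Forall_map in Hsat. exact Hsat.
    + rewrite Hz in Hobj by (intros H; apply in_map_iff in H; now destruct H as [? [? _]]).
      unfold lift, at_t, upd in Hobj. simpl in Hobj. lra.
  - intros [x [Hx Hxt]].
    set (z o := match o with
                | None => t
                | Some v => if in_dec V_eq_dec v vs then x v else 0 end).
    assert (Hzx : forall g, depends_only vs g -> lift g z = g x).
    { intros g Hg. apply Hg. intros u Hu. simpl. now destruct (in_dec V_eq_dec u vs). }
    exists z. split.
    + intros [v|] Hv; simpl; unfold at_t, upd; simpl; [|reflexivity].
      destruct (in_dec V_eq_dec v vs); [exfalso; apply Hv, in_map; assumption | reflexivity].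
    + constructor.
      * rewrite (Hzx f Hfvs). simpl. lra.
      * apply Forall_map. rewrite Forall_forall in HCvs, Hx |- *.
        intros g Hg. rewrite (Hzx g (HCvs g Hg)). now apply Hx.
Qed.

Theorem lp_min_attained (C : list ((V -> R) -> R)) (f : (V -> R) -> R) (vs : list V) :
  Forall (coord_affine V_eq_dec) C -> coord_affine V_eq_dec f ->
  Forall (depends_only vs) C -> depends_only vs f ->
  (exists x, satisfies C x) -> (exists lb, forall x, satisfies C x -> lb <= f x) ->
  exists xs, satisfies C xs /\ forall x, satisfies C x -> f xs <= f x.
Proof.
  intros HC Hf HCvs Hfvs [x0 Hx0] [lb Hlb].
  destruct (objective_bounds_halflines C f vs HC Hf HCvs Hfvs) as [P HP].
  destruct (solves_all_min P (f x0) lb) as [ts [Hts Hmin]].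
  - apply HP. exists x0. split; [exact Hx0 | apply Rle_refl].
  - intros t Ht. apply HP in Ht. destruct Ht as [x [Hx Hxt]].
    specialize (Hlb x Hx). lra.
  - apply HP in Hts. destruct Hts as [xs [Hxs Hxst]].
    exists xs. split; [exact Hxs|]. intros x Hx.
    assert (ts <= f x) by (apply Hmin, HP; exists x; split; [exact Hx | apply Rle_refl]).
    lra.
Qed.

End LinearProgram.

(** * PLP as a linear program *)

Inductive Var := VB (j : nat) (m : Mode) (b : nat) | VU0 (l : nat) | VU (l i : nat) (m : Mode).

Definition Var_eq_dec (u w : Var) : {u = w} + {u <> w}.
Proof. decide equality; first [apply Nat.eq_dec | decide equality]. Defined.

Definition to_plp (y : Var -> R) : PLPVar :=
  {| beta := fun j m b => y (VB j m b); U0 := fun l => y (VU0 l); U := fun l i m => y (VU l i m) |}.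

Definition of_plp (v : PLPVar) : Var -> R :=
  fun u => match u with
           | VB j m b => beta v j m b
           | VU0 l => U0 v l
           | VU l i m => U v l i m
           end.

Lemma to_of_plp v : to_plp (of_plp v) = v.
Proof. destruct v; reflexivity. Qed.

Definition all_modes : list Mode := [MO; MM; MA].
Definition all_actions : list Action := [aA; aM1; aP; aS; aMN; aR1].

Lemma in_all_modes m : In m all_modes.
Proof. destruct m; simpl; tauto. Qed.

Lemma in_all_actions a : In a all_actions.
Proof. destruct a; simpl; tauto. Qed.

Lemma sum1_ext n f g : (forall b, (1 <= b <= n)%nat -> f b = g b) -> sum1 n f = sum1 n g.
Proof.
  intros H. unfold sum1. f_equal. apply map_ext_in. intros b Hb.
  apply in_seq in Hb. apply H. lia.
Qed.

Lemma sum1_zero n f : (forall b, f b = 0) -> sum1 n f = 0.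
Proof.
  intros H. unfold sum1. induction (seq 1 n) as [|b s IH]; simpl; [reflexivity|].
  rewrite H, IH. ring.
Qed.

Lemma sum1_ge n f c : (forall b, (1 <= b <= n)%nat -> c <= f b) -> INR n * c <= sum1 n f.
Proof.
  intros H. unfold sum1.
  assert (Hs : forall s, (forall b, (s <= b < s + n)%nat -> c <= f b) ->
                 INR n * c <= fold_right Rplus 0 (map f (seq s n))).
  { clear H. induction n as [|n IH]; intros s H.
    - simpl. lra.
    - rewrite S_INR. cbn [seq map fold_right].
      assert (c <= f s) by (apply H; lia).
      assert (INR n * c <= fold_right Rplus 0 (map f (seq (S s) n)))
        by (apply IH; intros; apply H; lia).
      lra. }
  apply Hs. intros b Hb. apply H. lia.
Qed.

Section PLP.

Variable d : PLPData.

Definition feasible_actions (i : nat) (x : Mode) : list Action :=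
  if Nat.eqb (S i) (I d) then [aA]
  else match x with
       | MO => aA :: aP :: aS :: (if Nat.leb (i + NM d + 1) (I d) then [aM1] else [])
       | MM => aA :: aMN :: (if Nat.leb (i + NR d + 1) (I d) then [aR1] else [])
       | MA => [aA]
       end.

Lemma In_feasible_actions i x a : In a (feasible_actions i x) <-> feasible_action d i x a.
Proof.
  unfold feasible_actions, feasible_action. destruct (Nat.eqb (S i) (I d)).
  - simpl. intuition congruence.
  - destruct x; simpl; [destruct (Nat.leb_spec (i + NM d + 1) (I d)) |
      destruct (Nat.leb_spec (i + NR d + 1) (I d)) | ]; simpl; intuition (try congruence; try lia).
Qed.

Definition bellman_rhs (v : PLPVar) (l i : nat) (x : Mode) (a : Action) : R :=
  reward d l i x a - penalty d v l i x a + delta d * U v l (gtrans d i x a) (ftrans x a).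

Definition plp_constraints : list ((Var -> R) -> R) :=
  flat_map (fun l =>
       map (fun a y => bellman_rhs (to_plp y) l 0 (x0 d) a - U0 (to_plp y) l)
           (feasible_actions 0 (x0 d))
    ++ flat_map (fun i => flat_map (fun x =>
         map (fun a y => bellman_rhs (to_plp y) l i x a - U (to_plp y) l i x)
             (feasible_actions i x)) all_modes) (seq 1 (I d - 2))
    ++ map (fun x y => reward d l (I d - 1) x aA - U (to_plp y) l (I d - 1) x) all_modes)
    (seq 1 (L d)).

Lemma satisfies_plp_constraints y :
  satisfies plp_constraints y <-> PLP_feasible d (to_plp y).
Proof.
  unfold satisfies, plp_constraints, PLP_feasible, bellman_rhs.
  rewrite Forall_flat_map, Forall_forall.
  split; intros H l Hl; [assert (Hl' : In l (seq 1 (L d))) by (apply in_seq; lia)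
                        | apply in_seq in Hl; assert (Hl' : (1 <= l <= L d)%nat) by lia];
    specialize (H l Hl').
  - rewrite !Forall_app in H. destruct H as [H0 [H1 H2]]. split; [|split].
    + intros a Ha. rewrite Forall_map, Forall_forall in H0.
      specialize (H0 a (proj2 (In_feasible_actions _ _ _) Ha)). cbv beta in H0. lra.
    + intros i x a Hi Ha. rewrite Forall_flat_map, Forall_forall in H1.
      assert (Hi' : In i (seq 1 (I d - 2))) by (apply in_seq; lia).
      specialize (H1 i Hi').
      rewrite Forall_flat_map, Forall_forall in H1. specialize (H1 x (in_all_modes x)).
      rewrite Forall_map, Forall_forall in H1.
      specialize (H1 a (proj2 (In_feasible_actions _ _ _) Ha)). cbv beta in H1. lra.
    + intros x. rewrite Forall_map, Forall_forall in H2.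
      specialize (H2 x (in_all_modes x)). cbv beta in H2. lra.
  - destruct H as [H0 [H1 H2]]. rewrite !Forall_app. split; [|split].
    + rewrite Forall_map, Forall_forall. intros a Ha.
      specialize (H0 a (proj1 (In_feasible_actions _ _ _) Ha)). lra.
    + rewrite Forall_flat_map, Forall_forall. intros i Hi. apply in_seq in Hi.
      rewrite Forall_flat_map, Forall_forall. intros x _.
      rewrite Forall_map, Forall_forall. intros a Ha.
      specialize (H1 i x a ltac:(lia) (proj1 (In_feasible_actions _ _ _) Ha)). lra.
    + rewrite Forall_map, Forall_forall. intros x _. specialize (H2 x). lra.
Qed.

Lemma penalty_affine l i x a :
  coord_affine Var_eq_dec (fun y => penalty d (to_plp y) l i x a).
Proof.
  unfold penalty. cbv zeta. destruct (ftrans x a); try apply coord_affine_const;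
    destruct Nat.leb; try apply coord_affine_const;
    unfold sum1; apply coord_affine_sum; intros b;
    apply coord_affine_scale_r, coord_affine_proj.
Qed.

Lemma bellman_rhs_affine l i x a :
  coord_affine Var_eq_dec (fun y => bellman_rhs (to_plp y) l i x a).
Proof.
  unfold bellman_rhs. apply coord_affine_add.
  - apply coord_affine_sub; [apply coord_affine_const | apply penalty_affine].
  - apply coord_affine_scale_l, coord_affine_proj.
Qed.

Lemma plp_constraints_affine : Forall (coord_affine Var_eq_dec) plp_constraints.
Proof.
  unfold plp_constraints. rewrite Forall_flat_map, Forall_forall. intros l _.
  rewrite !Forall_app, !Forall_map, Forall_flat_map, !Forall_forall. split; [|split].
  - intros a _. apply coord_affine_sub; [apply bellman_rhs_affine | apply coord_affine_proj].
  - intros i _. rewrite Forall_flat_map, Forall_forall. intros x _.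
    rewrite Forall_map, Forall_forall. intros a _.
    apply coord_affine_sub; [apply bellman_rhs_affine | apply coord_affine_proj].
  - intros x _. apply coord_affine_sub; [apply coord_affine_const | apply coord_affine_proj].
Qed.

Lemma objective_affine : coord_affine Var_eq_dec (fun y => PLP_objective d (to_plp y)).
Proof.
  unfold PLP_objective, sum1. apply coord_affine_scale_l, coord_affine_sum.
  intros l. apply coord_affine_proj.
Qed.

(* Bounds every index occurring in PLP, including the stages reached by
   [gtrans], which may exceed [I]. *)
Definition index_bound : nat := S (L d + I d + NM d + NR d).

Definition plp_vars : list Var :=
  let idx := seq 0 (S index_bound) in
  map VU0 idx
  ++ flat_map (fun l => flat_map (fun i => map (VU l i) all_modes) idx) idx
  ++ flat_map (fun j => flat_map (fun m => map (VB j m) (seq 1 (B d j))) all_modes) idx.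

Lemma in_plp_vars_U0 l : (l <= index_bound)%nat -> In (VU0 l) plp_vars.
Proof.
  intros Hl. apply in_app_iff. left. apply in_map, in_seq. lia.
Qed.

Lemma in_plp_vars_U l i x :
  (l <= index_bound)%nat -> (i <= index_bound)%nat -> In (VU l i x) plp_vars.
Proof.
  intros Hl Hi. apply in_app_iff. right. apply in_app_iff. left.
  apply in_flat_map. exists l. split; [apply in_seq; lia|].
  apply in_flat_map. exists i. split; [apply in_seq; lia|].
  apply in_map, in_all_modes.
Qed.

Lemma in_plp_vars_B j x b :
  (j <= index_bound)%nat -> (1 <= b <= B d j)%nat -> In (VB j x b) plp_vars.
Proof.
  intros Hj Hb. apply in_app_iff. right. apply in_app_iff. right.
  apply in_flat_map. exists j. split; [apply in_seq; lia|].
  apply in_flat_map. exists x. split; [apply in_all_modes|].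
  apply in_map, in_seq. lia.
Qed.

Lemma gtrans_le i x a : (gtrans d i x a <= i + NM d + NR d + 1)%nat.
Proof. destruct x, a; simpl; lia. Qed.

Lemma penalty_depends l i x a :
  depends_only plp_vars (fun y => penalty d (to_plp y) l i x a).
Proof.
  intros y y' H. unfold penalty. cbv zeta.
  destruct (ftrans x a); try reflexivity;
    destruct (Nat.leb_spec (gtrans d i x a) (I d - 2)); try reflexivity;
    apply sum1_ext; intros b Hb; simpl; rewrite H; try reflexivity;
    apply in_plp_vars_B; unfold index_bound; lia.
Qed.

Lemma bellman_rhs_depends l i x a : (l <= L d)%nat -> (i <= I d)%nat ->
  depends_only plp_vars (fun y => bellman_rhs (to_plp y) l i x a).
Proof.
  intros Hl Hi y y' H. unfold bellman_rhs.
  rewrite (penalty_depends l i x a y y' H). do 2 f_equal.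
  pose proof (gtrans_le i x a).
  apply H, in_plp_vars_U; unfold index_bound; lia.
Qed.

Lemma plp_constraints_depend : Forall (depends_only plp_vars) plp_constraints.
Proof.
  unfold plp_constraints. rewrite Forall_flat_map, Forall_forall. intros l Hl.
  apply in_seq in Hl.
  rewrite !Forall_app, !Forall_map, Forall_flat_map, !Forall_forall. split; [|split].
  - intros a _ y y' H. cbv beta.
    rewrite (bellman_rhs_depends l 0 (x0 d) a ltac:(lia) ltac:(lia) y y' H).
    f_equal. apply H, in_plp_vars_U0. unfold index_bound. lia.
  - intros i Hi. apply in_seq in Hi. rewrite Forall_flat_map, Forall_forall. intros x _.
    rewrite Forall_map, Forall_forall. intros a _ y y' H. cbv beta.
    rewrite (bellman_rhs_depends l i x a ltac:(lia) ltac:(lia) y y' H).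
    f_equal. apply H, in_plp_vars_U; unfold index_bound; lia.
  - intros x _ y y' H. cbv beta. f_equal.
    apply H, in_plp_vars_U; unfold index_bound; lia.
Qed.

Lemma objective_depends : depends_only plp_vars (fun y => PLP_objective d (to_plp y)).
Proof.
  intros y y' H. unfold PLP_objective. f_equal. apply sum1_ext. intros l Hl.
  apply H, in_plp_vars_U0. unfold index_bound. lia.
Qed.

Lemma abandon_feasible i x : feasible_action d i x aA.
Proof. unfold feasible_action. destruct Nat.eqb, x; auto. Qed.

Lemma abandoned_value_nonneg w l i : 0 <= delta d -> PLP_feasible d w ->
  (1 <= l <= L d)%nat -> (1 <= i <= I d - 1)%nat -> 0 <= U w l i MA.
Proof.
  intros Hdelta Hw Hl. destruct (Hw l Hl) as [_ [Hstage Hlast]].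
  remember (I d - 1 - i)%nat as k eqn:Hk. revert i Hk.
  induction k as [|k IH]; intros i Hk Hi.
  - replace i with (I d - 1)%nat by lia. specialize (Hlast MA). simpl in Hlast. lra.
  - specialize (Hstage i MA aA ltac:(lia) (abandon_feasible i MA)).
    specialize (IH (S i) ltac:(lia) ltac:(lia)).
    unfold penalty in Hstage. simpl in Hstage.
    assert (0 <= delta d * U w l (S i) MA) by (apply Rmult_le_pos; lra).
    lra.
Qed.

Lemma objective_ge_salvage w : (2 <= I d)%nat -> (1 <= L d)%nat -> 0 <= delta d ->
  x0 d = MO \/ x0 d = MM -> PLP_feasible d w -> Salv d <= PLP_objective d w.
Proof.
  intros HI HL Hdelta Hx0 Hw.
  assert (HU0 : forall l, (1 <= l <= L d)%nat -> Salv d <= U0 w l).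
  { intros l Hl. destruct (Hw l Hl) as [Hfirst _].
    specialize (Hfirst aA (abandon_feasible 0 (x0 d))).
    assert (0 <= delta d * U w l 1 MA)
      by (apply Rmult_le_pos; [lra | apply (abandoned_value_nonneg w l); auto; lia]).
    unfold penalty in Hfirst.
    destruct Hx0 as [E|E]; rewrite E in Hfirst; simpl in Hfirst; lra. }
  assert (HLpos : 0 < INR (L d)) by (apply lt_0_INR; lia).
  pose proof (sum1_ge (L d) (U0 w) (Salv d) HU0).
  unfold PLP_objective.
  replace (Salv d) with (/ INR (L d) * (INR (L d) * Salv d)) at 1 by (field; lra).
  apply Rmult_le_compat_l; [left; apply Rinv_0_lt_compat|]; assumption.
Qed.

Lemma plp_feasible_exists : 0 <= delta d < 1 -> exists w, PLP_feasible d w.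
Proof.
  intros Hdelta.
  set (rewards := flat_map (fun l => flat_map (fun i => flat_map (fun x =>
                    map (reward d l i x) all_actions) all_modes) (seq 0 (S (I d))))
                    (seq 1 (L d))).
  set (M := MaxRlist (0 :: rewards)).
  assert (HM0 : 0 <= M) by (apply MaxRlist_P1; now left).
  assert (HM : forall l i x a, (1 <= l <= L d)%nat -> (i <= I d - 1)%nat ->
                 reward d l i x a <= M).
  { intros l i x a Hl Hi. apply MaxRlist_P1. right.
    apply in_flat_map. exists l. split; [apply in_seq; lia|].
    apply in_flat_map. exists i. split; [apply in_seq; lia|].
    apply in_flat_map. exists x. split; [apply in_all_modes|].
    apply in_map, in_all_actions. }
  (* constant values [K] with [K = M + delta K] dominate every Bellman right-hand side *)
  set (K := M / (1 - delta d)).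
  assert (HK : K = M + delta d * K) by (unfold K; field; lra).
  assert (HdK : 0 <= delta d * K)
    by (apply Rmult_le_pos; [lra | apply Rmult_le_pos; [lra | left; apply Rinv_0_lt_compat; lra]]).
  set (w := {| beta := fun _ _ _ => 0; U0 := fun _ => K; U := fun _ _ _ => K |}).
  assert (Hpen : forall l i x a, penalty d w l i x a = 0).
  { intros l i x a. unfold penalty. cbv zeta.
    destruct (ftrans x a); try reflexivity; destruct Nat.leb; try reflexivity;
      apply sum1_zero; intros b; apply Rmult_0_l. }
  exists w. intros l Hl. split; [|split].
  - intros a _. rewrite Hpen. simpl. pose proof (HM l 0%nat (x0 d) a Hl ltac:(lia)). lra.
  - intros i x a Hi _. rewrite Hpen. simpl. pose proof (HM l i x a Hl ltac:(lia)). lra.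
  - intros x. simpl. pose proof (HM l (I d - 1)%nat x aA Hl ltac:(lia)). lra.
Qed.

End PLP.

Theorem proposition1 (d : PLPData)
  (HI : (2 <= I d)%nat) (HNM : (1 <= NM d)%nat) (HNR : (1 <= NR d)%nat)
  (HL : (1 <= L d)%nat)
  (HB : forall j, (1 <= j <= I d - 2)%nat -> (1 <= B d j)%nat)
  (Hdelta : 0 < delta d < 1)
  (Hs : forall l i, (1 <= l <= L d)%nat -> (i <= I d - 1)%nat ->
          0 <= sC d l i /\ 0 <= sE d l i /\ 0 <= sN d l i)
  (Hx0 : x0 d = MO \/ x0 d = MM) :
  exists v : PLPVar, PLP_feasible d v /\
    forall w : PLPVar, PLP_feasible d w -> PLP_objective d v <= PLP_objective d w.
Proof.
  destruct (lp_min_attained Var_eq_dec (plp_constraints d)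
              (fun y => PLP_objective d (to_plp y)) (plp_vars d))
    as [y [Hy Hmin]].
  - apply plp_constraints_affine.
  - apply objective_affine.
  - apply plp_constraints_depend.
  - apply objective_depends.
  - destruct (plp_feasible_exists d ltac:(lra)) as [w Hw].
    exists (of_plp w). apply satisfies_plp_constraints. now rewrite to_of_plp.
  - exists (Salv d). intros y Hy.
    apply (objective_ge_salvage d); [lia | lia | lra | exact Hx0 |].
    now apply satisfies_plp_constraints.
  - exists (to_plp y). split; [now apply satisfies_plp_constraints|].
    intros w Hw. rewrite <- (to_of_plp w). apply Hmin.
    apply satisfies_plp_constraints. now rewrite to_of_plp.
Qed.
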